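(* Let $\pi : (\mathbb Z_2^2)^* \to \mathbb Z_3$ be a bijection and let $g,h \in (\mathbb Z_2^2)^*$ with $g\neq h$. Suppose $q\equiv 1\pmod 6$ is a prime power and $\rho$ is a primitive element of $\mathbb F_q$. Then $c^3_q\big(\pi(h-g)-\pi(g),\ \pi(h)-\pi(g)\big) = c^3_q(1,2)$.
   Context: $(\mathbb Z_2^2)^*=\mathbb Z_2^2\setminus\{0\}$. Write $q=6r+1$; for $i\in\mathbb Z_3$, $C^3_q(i)=\{\rho^{3j+i}: 0\le j\le 2r-1\}$, and for $a,b\in\mathbb Z_3$, $c^3_q(a,b)=|(C^3_q(a)+1)\cap C^3_q(b)|$. *)

From HB Require Import structures.
From mathcomp Require Import all_boot all_order all_algebra all_field.
Set Implicit Arguments. Unset Strict Implicit. Unset Printing Implicit Defensive.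
Import GRing.Theory.
Local Open Scope ring_scope.

Definition Z22 : Type := ('Z_2 * 'Z_2)%type.

Definition cyc_r (F : finFieldType) : nat := ((#|F| - 1) %/ 6)%N.

Definition cycC (F : finFieldType) (rho : F) (i : 'Z_3) : {set F} :=
  [set rho ^+ (3 * j + i)%N | j : 'I_(2 * cyc_r F)].

Definition cycnum (F : finFieldType) (rho : F) (a b : 'Z_3) : nat :=
  #|[set x + 1 | x in cycC rho a] :&: cycC rho b|.

(* Write [C_i] for the coset [C^3_q(i)] of the index-3 subgroup of [F^*]. Since [q = 6r + 1], the
   element [-1 = rho^(3r)] lies in [C_0], so [x |-> 1 - x] maps [(C_a + 1) ∩ C_b] injectively
   into [(C_b + 1) ∩ C_a], and [c(a, b) = c(b, a)]. On the other side, for distinct nonzero [g, h]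
   in [Z_2^2] the elements [g], [h], [h - g] are the three nonzero elements, so their images under
   [pi] are pairwise distinct; the two differences [pi(h - g) - pi(g)] and [pi(h) - pi(g)] are thus
   the two nonzero residues mod 3 in some order. *)
From HB Require Import structures.
From mathcomp Require Import all_boot all_order all_algebra all_field.
From mathcomp Require Import zify.
Set Implicit Arguments. Unset Strict Implicit. Unset Printing Implicit Defensive.
Import GRing.Theory.
Local Open Scope ring_scope.

Lemma Z22_addrr (v : Z22) : v + v = 0.
Proof. by case: v => [[[|[|?]] ?] [[|[|?]] ?]] //; apply/eqP. Qed.

Lemma Z22_subr_neq (u v : Z22) : u != 0 -> v != 0 -> u != v ->
  [&& u - v != 0, u - v != u & u - v != v].
Proof.
move=> u_nz v_nz uv; rewrite subr_eq0 uv /= !subr_eq Z22_addrr u_nz andbT.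
by rewrite -[X in X != _]addr0 (inj_eq (addrI u)) eq_sym.
Qed.

Lemma Z3_neq0_neq (x y : 'Z_3) : x != 0 -> y != 0 -> x != y ->
  (x == 1) && (y == 2) || (x == 2) && (y == 1).
Proof. by case: x y => [[|[|[|?]]] ?] [[|[|[|?]]] ?]. Qed.

Lemma prim_expr_half (R : idomainType) (n : nat) (z : R) :
  (n.*2).-primitive_root z -> z ^+ n = -1.
Proof.
move=> prim_z; have n_gt0 : (0 < n)%N by have := prim_order_gt0 prim_z; lia.
have : (z ^+ n) ^+ 2 == 1 by rewrite -exprM muln2 prim_expr_order.
rewrite sqrf_eq1 -(prim_order_dvd prim_z) => /orP [/dvdn_leq | /eqP //]; lia.
Qed.

Section CyclotomicClasses.
Variables (F : finFieldType) (rho : F).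
Hypotheses (q_mod6 : (#|F| %% 6 = 1)%N) (rho_prim : (#|F|.-1).-primitive_root rho).

Let r := cyc_r F.

Lemma card_cyc_r : #|F|.-1 = (6 * r)%N.
Proof. by rewrite /r /cyc_r; have := q_mod6; lia. Qed.

Lemma cyc_r_gt0 : (0 < r)%N.
Proof.
have q_gt1 : (1 < #|F|)%N := finNzRing_gt1 F.
by rewrite /r /cyc_r; have := q_mod6; lia.
Qed.

Lemma mem_cycC (k : nat) (i : 'Z_3) : (k %% 3 = i)%N -> rho ^+ k \in cycC rho i.
Proof.
move=> k_i; rewrite -(prim_expr_mod rho_prim) card_cyc_r.
set m := (k %% (6 * r))%N.
have m_i : (m %% 3 = i)%N by rewrite /m modn_dvdm ?k_i // dvdn_mulr.
have m_lt6r : (m < 6 * r)%N by rewrite ltn_mod muln_gt0 cyc_r_gt0.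
have m_lt : (m %/ 3 < 2 * r)%N by lia.
apply/imsetP; exists (Ordinal m_lt) => //=.
by rewrite [in LHS](divn_eq m 3) m_i mulnC.
Qed.

Lemma cycCP (x : F) (i : 'Z_3) :
  x \in cycC rho i -> exists2 k, x = rho ^+ k & (k %% 3 = i)%N.
Proof.
case/imsetP => j _ ->; exists (3 * j + i)%N => //.
have i_lt3 : (i < 3)%N := ltn_ord i.
lia.
Qed.

Lemma cycC_opp (x : F) (i : 'Z_3) : x \in cycC rho i -> - x \in cycC rho i.
Proof.
have prim_half : ((3 * r).*2).-primitive_root rho.
  by have := rho_prim; rewrite card_cyc_r -mul2n mulnA.
case/cycCP => k -> k_i.
rewrite -mulN1r -(prim_expr_half prim_half) -exprD.
by apply: mem_cycC; lia.
Qed.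

Lemma cycnum_le (a b : 'Z_3) : (cycnum rho b a <= cycnum rho a b)%N.
Proof.
have inj_1B : injective (fun y : F => 1 - y) by move=> y z /addrI/oppr_inj.
rewrite /cycnum -(card_imset _ inj_1B); apply: subset_leq_card.
apply/subsetP => _ /imsetP [_ /setIP [/imsetP [x Cb_x ->] Ca_x1] ->].
rewrite inE; apply/andP; split.
- by apply/imsetP; exists (- (x + 1)); [exact: cycC_opp | rewrite addrC].
- by rewrite opprD addrCA subrr addr0 cycC_opp.
Qed.

Lemma cycnumC (a b : 'Z_3) : cycnum rho a b = cycnum rho b a.
Proof. by apply/eqP; rewrite eqn_leq !cycnum_le. Qed.

End CyclotomicClasses.

Theorem proposition3p5
  (pi : Z22 -> 'Z_3)
  (pi_inj : {in [pred x : Z22 | x != 0] &, injective pi})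
  (pi_surj : forall z : 'Z_3, exists2 x : Z22, x != 0 & pi x = z)
  (g h : Z22) (g_nz : g != 0) (h_nz : h != 0) (gh : g != h)
  (F : finFieldType) (hq : (#|F| %% 6 = 1)%N)
  (rho : F) (rho_prim : (#|F|.-1).-primitive_root rho) :
  cycnum rho (pi (h - g) - pi g) (pi h - pi g) = cycnum rho 1 2.
Proof.
have pi_neq u v : u != 0 -> v != 0 -> u != v -> pi u != pi v.
  by move=> u_nz v_nz; apply: contra => /eqP/pi_inj->; rewrite ?inE.
have hg : h != g by rewrite eq_sym.
case/and3P: (Z22_subr_neq h_nz g_nz hg) => hg_nz hg_h hg_g.
have x_nz : pi (h - g) - pi g != 0 by rewrite subr_eq0 pi_neq.
have y_nz : pi h - pi g != 0 by rewrite subr_eq0 pi_neq.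
have xy : pi (h - g) - pi g != pi h - pi g by rewrite (can_eq (addrK _)) pi_neq.
by case/orP: (Z3_neq0_neq x_nz y_nz xy) => /andP [/eqP -> /eqP ->] //; exact: cycnumC.
Qed.
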